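(* Let $T\in V$ be a target variable. If $\zeta_T=0$ (i.e. $T\notin\Upsilon_i$ for all $i$) and $\Upsilon$ is not conservative, then $pa(T)\subseteq\bigcup_{i=1}^{n}MB_i(T)\subseteq MB(T)$.
   Context: Let $G=(V,E)$ be a DAG (causal Bayesian network) over a finite set $V$ of random variables with joint distribution $P$ satisfying the Markov condition with respect to $G$; causal sufficiency is assumed. For $X\in V$, $pa(X)$ and $ch(X)$ are the parents and children of $X$ in $G$, $sp(X)=\big(\bigcup_{Y\in ch(X)}pa(Y)\big)\setminus\{X\}$ is the set of spouses, and $MB(X)=pa(X)\cup ch(X)\cup sp(X)$ is the Markov blanket. There are $n\ge 1$ intervention experiments; in the $i$-th, the set $\Upsilon_i\subseteq V$ (possibly empty) is manipulated, and $\Upsilon=\{\Upsilon_1,\dots,\Upsilon_n\}$. The post-intervention DAG is $G_i=(V,E_i)$ with $E_i=\{(a,b)\in E: b\notin\Upsilon_i\}$, with distribution $P_i(V)=\prod_{V_j\notin\Upsilon_i}P(V_j\mid pa(V_j))\prod_{V_j\in\Upsilon_i}P_i(V_j)$, and $D_i$ is a dataset drawn from $P_i$. It is assumed that each $P_i$ is faithful to $G_i$ and that conditional independence tests on $D_i$ are reliable (return exactly the conditional independences of $P_i$). $MB_i(T)$ denotes the Markov blanket of $T$ found in $D_i$, i.e. the set of parents, children and spouses of $T$ in $G_i$. $\zeta_T=|\{i:T\in\Upsilon_i\}|$. $\Upsilon$ is called conservative if for every $V_j\in\bigcup_{i=1}^n\Upsilon_i$ there exists $i$ with $V_j\notin\Upsilon_i$.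 *)

From mathcomp Require Import all_boot.
Set Implicit Arguments. Unset Strict Implicit. Unset Printing Implicit Defensive.

Section Graph.
Variable V : finType.

(* A directed graph given by its edge relation: E a b means a -> b. *)
Definition acyclic (E : rel V) : Prop := forall a b, E a b -> ~~ connect E b a.

Definition pa (E : rel V) (X : V) : {set V} := [set Y | E Y X].
Definition ch (E : rel V) (X : V) : {set V} := [set Y | E X Y].
Definition sp (E : rel V) (X : V) : {set V} :=
  (\bigcup_(Y in ch E X) pa E Y) :\ X.
Definition MB (E : rel V) (X : V) : {set V} := pa E X :|: ch E X :|: sp E X.

Definition post_int (E : rel V) (U : {set V}) : rel V :=
  [rel a b | E a b && (b \notin U)].

(* MB_i(T): the Markov blanket of T found in D_i, which (under faithfulness of
   P_i to G_i and reliable CI tests) is the set of parents, children and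
   spouses of T in G_i. *)
Definition MB_i (E : rel V) (n : nat) (Ups : 'I_n -> {set V}) (i : 'I_n) (T : V)
  : {set V} := MB (post_int E (Ups i)) T.

Definition zeta (n : nat) (Ups : 'I_n -> {set V}) (T : V) : nat :=
  #|[set i : 'I_n | T \in Ups i]|.

Definition conservative (n : nat) (Ups : 'I_n -> {set V}) : Prop :=
  forall v, v \in \bigcup_(i < n) Ups i -> exists i : 'I_n, v \notin Ups i.
End Graph.

From mathcomp Require Import all_boot.

Set Implicit Arguments. Unset Strict Implicit. Unset Printing Implicit Defensive.

(** Intervening only deletes edges, and the Markov blanket is monotone in the
    edge relation, so every [MB_i(T)] lies in [MB(T)].  Conversely, when [T]
    itself is never manipulated, no edge into [T] is deleted, so [pa(T)] is
    already part of the first experiment's blanket [MB_1(T)]. *)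

Section MarkovBlanket.
Variable V : finType.

Lemma pa_subrel (E' E : rel V) X : subrel E' E -> pa E' X \subset pa E X.
Proof. by move=> sE; apply/subsetP => Y; rewrite /pa !inE => /sE. Qed.

Lemma ch_subrel (E' E : rel V) X : subrel E' E -> ch E' X \subset ch E X.
Proof. by move=> sE; apply/subsetP => Y; rewrite /ch !inE => /sE. Qed.

Lemma sp_subrel (E' E : rel V) X : subrel E' E -> sp E' X \subset sp E X.
Proof.
move=> sE; apply: setSD; apply/bigcupsP => Y chY.
apply: subset_trans (pa_subrel Y sE) (bigcup_sup Y _).
exact: subsetP (ch_subrel X sE) Y chY.
Qed.

Lemma MB_subrel (E' E : rel V) X : subrel E' E -> MB E' X \subset MB E X.
Proof.
by move=> sE; rewrite /MB !setUSS ?pa_subrel ?ch_subrel ?sp_subrel.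
Qed.

Lemma pa_sub_MB (E : rel V) X : pa E X \subset MB E X.
Proof. by rewrite /MB -setUA subsetUl. Qed.

Lemma post_int_subrel (E : rel V) (U : {set V}) : subrel (post_int E U) E.
Proof. by move=> a b /andP []. Qed.

Lemma pa_post_int (E : rel V) (U : {set V}) X :
  X \notin U -> pa (post_int E U) X = pa E X.
Proof.
by move=> XnU; apply/setP => Y; rewrite /pa /post_int !inE /= XnU andbT.
Qed.

Lemma zeta_eq0 n (Ups : 'I_n -> {set V}) X :
  (zeta Ups X == 0) = [forall i, X \notin Ups i].
Proof.
rewrite /zeta cards_eq0; apply/eqP/forallP => [U0 i | XnU].
  by apply/negP => XU; have := in_set0 i; rewrite -U0 inE XU.
by apply/setP => i; rewrite !inE (negbTE (XnU i)).
Qed.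

End MarkovBlanket.

Theorem theorem3 (V : finType) (E : rel V) (hE : acyclic E)
  (n : nat) (hn : 1 <= n) (Ups : 'I_n -> {set V}) (T : V) :
  zeta Ups T = 0 -> ~ conservative Ups ->
  pa E T \subset \bigcup_(i < n) MB_i E Ups i T /\
  \bigcup_(i < n) MB_i E Ups i T \subset MB E T.
Proof.
move=> /eqP; rewrite zeta_eq0 => /forallP T_unmanipulated _; split.
- apply: subset_trans (bigcup_sup (Ordinal hn) isT).
  rewrite /MB_i -(pa_post_int E (T_unmanipulated (Ordinal hn))).
  exact: pa_sub_MB.
- by apply/bigcupsP => i _; apply/MB_subrel/post_int_subrel.
Qed.
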